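(* For all $n\in\mathbb N$ the following holds in the $q$-shuffle algebra $\mathbb V$: $$0=\sum_{i=0}^n(-1)^i[2n-i]_q\,C_i\star\tilde G_{n-i}.$$
   Context: Let $\mathbb F$ be a field and let $q\in\mathbb F$ be nonzero and not a root of unity. Let $[m]_q=(q^m-q^{-m})/(q-q^{-1})$ for $m\in\mathbb Z$. Let $\mathbb V$ be the free associative $\mathbb F$-algebra on noncommuting $x,y$, with basis the words (including $1$). Juxtaposition denotes concatenation. Set $\langle x,x\rangle=\langle y,y\rangle=2$ and $\langle x,y\rangle=\langle y,x\rangle=-2$. The $q$-shuffle product $\star$ is the bilinear product determined as follows: - $1\star v=v\star 1=v$; - for nontrivial words $u=u_1\cdots u_r$ and $v=v_1\cdots v_s$, $$u\star v=u_1((u_2\cdots u_r)\star v)+v_1(u\star(v_2\cdots v_s))q^{\langle u_1,v_1\rangle+\cdots+\langle u_r,v_1\rangle}.$$ This makes $\mathbb V$ an associative algebra, the $q$-shuffle algebra. For $k\in\mathbb N$, let $\tilde G_k=xyxy\cdots xy$ be the word of length $2k$, with $\tilde G_0=1$. Let $\overline x=1$ and $\overline y=-1$. A word $v_1\cdots v_m$ is Catalan if $\overline v_1+\cdots+\overline v_i\ge0$ for $1\le i\le m-1$ and $\overline v_1+\cdots+\overline v_m=0$. For $n\in\mathbb N$, $$C_n=\sum v_1\cdots v_{2n}\,[1]_q[1+\overline v_1]_q\cdots[1+\overline v_1+\cdots+\overline v_{2n}]_q,$$ where the sum is over Catalan words of length $2n$ (so $C_0=1$). *)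

From mathcomp Require Import all_boot all_order all_algebra.
Set Implicit Arguments. Unset Strict Implicit. Unset Printing Implicit Defensive.
Import Order.TTheory GRing.Theory Num.Theory.
Local Open Scope ring_scope.

Definition letter := bool.
Definition lx : letter := true.
Definition ly : letter := false.
Definition word := seq letter.

Section QShuffle.
Variables (F : fieldType) (q : F).

(* Elements of the free algebra V are represented as formal finite linear
   combinations of words: lists of (coefficient, word) pairs.  Two such lists
   represent the same element of V iff they have the same coefficient on every
   word ([vcoef]). *)
Definition vec := seq (F * word).

Definition vcoef (a : vec) (w : word) : F :=
  \sum_(p <- a) (if p.2 == w then p.1 else 0).

Definition vscale (c : F) (a : vec) : vec := [seq (c * p.1, p.2) | p <- a].

Definition vprefix (l : letter) (a : vec) : vec := [seq (p.1, l :: p.2) | p <- a].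

Definition pairing (a b : letter) : int := if a == b then 2%:Z else - 2%:Z.

Definition qint (m : int) : F := (q ^ m - q ^ (- m)) / (q - q^-1).

Fixpoint wstar (u : word) : word -> vec :=
  match u with
  | [::] => fun v => [:: (1, v)]
  | a :: u' =>
    fix wstar_u (v : word) : vec :=
      match v with
      | [::] => [:: (1, u)]
      | b :: v' =>
          vprefix a (wstar u' v)
          ++ vscale (q ^ (\sum_(c <- u) pairing c b)) (vprefix b (wstar_u v'))
      end
  end.

Definition vstar (a b : vec) : vec :=
  flatten [seq vscale (s.1 * t.1) (wstar s.2 t.2) | s <- a, t <- b].

Definition Gt (k : nat) : vec := [:: (1, flatten (nseq k [:: lx; ly]))].

Fixpoint all_words (m : nat) : seq word :=
  match m with
  | 0 => [:: [::]]
  | m'.+1 => [seq l :: w | l <- [:: lx; ly], w <- all_words m']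
  end.

Definition lbar (l : letter) : int := if l then 1 else -1.

Definition psum (w : word) (i : nat) : int := \sum_(l <- take i w) lbar l.

Definition catalan (w : word) : bool :=
  [forall i : 'I_(size w), (1 <= i)%N ==> (0 <= psum w i)]
  && (psum w (size w) == 0).

Definition Cat (n : nat) : vec :=
  [seq (qint 1 * \prod_(1 <= i < (2 * n).+1) qint (1 + psum w i), w)
  | w <- all_words (2 * n) & catalan w].

End QShuffle.

From mathcomp Require Import all_boot all_order all_algebra.
From mathcomp Require Import ring zify.
Import Order.TTheory GRing.Theory Num.Theory.
Local Open Scope ring_scope.
Set Implicit Arguments. Unset Strict Implicit. Unset Printing Implicit Defensive.

(* Since [2n-i]_q = (q^(2n-i) - q^-(2n-i)) / (q - q^-1), the identity says that the sum
   S(r) = sum_i (-1)^i r^(2n-i) C_i * G_(n-i) (q-shuffle products) takes the same value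
   at r = q and at r = q^-1.
   Read a Catalan word as a Dyck path: its coefficient in (-1)^i r^i C_i is the product of
   the step weights -[h+2]_q for an up-step x and r [h]_q for a down-step y, h being the
   height before the step, while the remaining factor r^(2(n-i)) gives the weight r to each
   letter of xyxy...xy.  In the q-shuffle, a letter b of xyxy...xy placed in front of the
   rest of a Dyck path now at height h picks up q^<rest, b> = q^(-+2h), which depends on h
   only.  Hence the coefficient of a word w in S(r) is computed by an automaton reading w
   whose state is the current height together with the position in xyxy...xy, and
   S(q) = S(q^-1) follows by induction on w from three linear relations between the values
   of this automaton at r = q and at r = q^-1. *)

Section Coefficients.
Variable F : fieldType.
Implicit Types (a b : vec F) (c : F) (l : letter) (v w : word).

Lemma vcoef_cat a b w : vcoef (a ++ b) w = vcoef a w + vcoef b w.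
Proof. by rewrite /vcoef big_cat. Qed.

Lemma vcoef_flatten (s : seq (vec F)) w :
  vcoef (flatten s) w = \sum_(a <- s) vcoef a w.
Proof. by rewrite /vcoef big_flatten. Qed.

Lemma vcoef_scale c a w : vcoef (vscale c a) w = c * vcoef a w.
Proof.
rewrite /vcoef /vscale big_map mulr_sumr; apply: eq_bigr => p _ /=.
by case: ifP; rewrite ?mulr0.
Qed.

Lemma vcoef_single c v w : vcoef [:: (c, v)] w = (v == w)%:R * c.
Proof. by rewrite /vcoef big_seq1; case: eqP; rewrite ?mul1r ?mul0r. Qed.

Lemma vcoef_prefix_nil l a : vcoef (vprefix l a) [::] = 0.
Proof. by rewrite /vcoef /vprefix big_map big1. Qed.

Lemma vcoef_prefix_cons l a (l' : letter) w :
  vcoef (vprefix l a) (l' :: w) = (l == l')%:R * vcoef a w.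
Proof.
rewrite /vcoef /vprefix big_map mulr_sumr; apply: eq_bigr => p _ /=.
by rewrite eqseq_cons; case: (l == l'); rewrite ?mul1r ?mul0r //=; case: ifP.
Qed.

End Coefficients.

Section QShuffleCoefficients.
Variables (F : fieldType) (q : F).
Implicit Types (u v w : word) (l : letter).

Lemma wstar_nil_r u : wstar q u [::] = [:: (1, u)].
Proof. by case: u. Qed.

Lemma vcoef_wstar_nil u v :
  vcoef (wstar q u v) [::] = ((u == [::]) && (v == [::]))%:R.
Proof.
case: u => [|a u]; first by rewrite /= vcoef_single mulr1.
case: v => [|b v]; first by rewrite /= vcoef_single mulr1.
by rewrite /= vcoef_cat vcoef_scale !vcoef_prefix_nil mulr0 addr0.
Qed.

Lemma vcoef_wstar_cons u v l w :
  vcoef (wstar q u v) (l :: w) =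
    (if u is a :: u' then (a == l)%:R * vcoef (wstar q u' v) w else 0)
  + (if v is b :: v' then
       (b == l)%:R * q ^ (\sum_(a <- u) pairing a b) * vcoef (wstar q u v') w
     else 0).
Proof.
case: u => [|a u]; case: v => [|b v].
- by rewrite /= vcoef_single addr0 mul0r.
- rewrite /= !vcoef_single add0r big_nil expr0z mulr1 eqseq_cons.
  by case: (b == l); case: (v == w); rewrite ?mulr1 ?mul1r ?mul0r ?mulr0.
- rewrite !wstar_nil_r !vcoef_single eqseq_cons addr0.
  by case: (a == l); case: (u == w); rewrite ?mulr1 ?mul1r ?mul0r ?mulr0.
by rewrite [wstar _ _ _]/= vcoef_cat vcoef_scale !vcoef_prefix_cons mulrCA mulrA.
Qed.

Lemma vcoef_wstar_eq0 u v w :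
  (size u + size v != size w)%N -> vcoef (wstar q u v) w = 0.
Proof.
elim: w u v => [|l w IH] u v.
  by rewrite vcoef_wstar_nil; case: u => [|? ?]; case: v.
rewrite vcoef_wstar_cons.
case: u => [|a u]; case: v => [|b v] Hs; rewrite ?add0r //.
- by rewrite IH ?mulr0.
- by rewrite IH ?mulr0 ?addr0 //; rewrite addn0 in Hs.
by rewrite !IH ?mulr0 ?addr0 //; move: Hs; rewrite /= ?addSn ?addnS.
Qed.

End QShuffleCoefficients.

Definition xy_word (k : nat) : word := flatten (nseq k [:: lx; ly]).

Lemma size_xy_word k : size (xy_word k) = (2 * k)%N.
Proof. by elim: k => //= k IH; rewrite IH; lia. Qed.

Lemma size_all_words m u : u \in all_words m -> size u = m.
Proof.
elim: m u => [|m IH] u; first by rewrite inE => /eqP ->.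
rewrite /= cats0 mem_cat => /orP [] /mapP [u' /IH Hu ->]; by rewrite /= Hu.
Qed.

Section DyckPaths.
Implicit Types (u : word) (c : letter).

Definition dyck_path (h : int) u : bool :=
  all (fun i => 0 <= h + psum u i) (iota 1 (size u)) && (h + psum u (size u) == 0).

Lemma psum0 u : psum u 0 = 0.
Proof. by rewrite /psum take0 big_nil. Qed.

Lemma psumS c u i : psum (c :: u) i.+1 = lbar c + psum u i.
Proof. by rewrite /psum /= big_cons. Qed.

Lemma psum_size u : psum u (size u) = (count id u)%:Z - (count negb u)%:Z.
Proof.
rewrite /psum take_size; elim: u => [|c u IH]; first by rewrite big_nil.
by rewrite big_cons IH; case: c; rewrite /lbar /=; lia.
Qed.

Lemma dyck_path_nil h : dyck_path h [::] = (h == 0).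
Proof. by rewrite /dyck_path /= psum0 addr0. Qed.

Lemma dyck_path_cons h c u :
  dyck_path h (c :: u) = (0 <= h + lbar c) && dyck_path (h + lbar c) u.
Proof.
rewrite /dyck_path /= psumS psum0 addr0 andbA psumS addrA; congr (_ && _ && _).
rewrite -(addn1 1) iotaDl all_map; apply: eq_all => i /=.
by rewrite add1n psumS addrA.
Qed.

Lemma catalan_dyck_path u : catalan u = dyck_path 0 u.
Proof.
rewrite /catalan /dyck_path add0r; case: eqP => [Hend|]; rewrite ?andbF ?andbT //.
apply/forallP/allP => [Hpos i|Hpos i].
  rewrite mem_iota add0r => /andP [Hi1 Hi2].
  have [Hi|Hi] := ltnP i (size u); first by have := Hpos (Ordinal Hi); rewrite /= Hi1.
  by rewrite (_ : i = size u) ?Hend //; lia.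
by apply/implyP => Hi1; rewrite -(add0r (psum u i)) Hpos // mem_iota Hi1 /= add1n ltnS ltnW.
Qed.

Lemma catalan_count u i : size u = (2 * i)%N -> catalan u ->
  count id u = i /\ count negb u = i.
Proof.
move=> Hs /andP [_ /eqP]; rewrite psum_size => Hbal.
have Hsplit : (count id u + count negb u)%N = size u := count_predC id u.
lia.
Qed.

End DyckPaths.

Section Weights.
Variables (F : fieldType) (q : F).
Implicit Types (r : F) (h : nat) (b c : letter) (u v w : word).

Lemma qint0 : qint q 0 = 0.
Proof. by rewrite /qint subrr mul0r. Qed.

Lemma qint_nat (m : nat) : qint q m = (q ^+ m - (q ^+ m)^-1) / (q - q^-1).
Proof. by rewrite /qint -exprnN -exprnP. Qed.

(* The value of q ^ <u, b> when the letters of u sum to -h. *)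
Definition qpair b h : F := if b then (q ^+ (2 * h))^-1 else q ^+ (2 * h).

(* A y-step from height 0 has weight r [0]_q = 0, so the truncation in h.-1 is harmless. *)
Definition step_height c h : nat := if c then h.+1 else h.-1.

Definition step_weight r c h : F := if c then - qint q h.+2 else r * qint q h.

Fixpoint path_weight r h u : F :=
  if u is c :: u' then step_weight r c h * path_weight r (step_height c h) u'
  else (h == 0)%:R.

Lemma path_weight_height r h u :
  path_weight r h u != 0 -> \sum_(a <- u) lbar a = - h%:Z.
Proof.
elim: u h => [|c u IH] h /=; first by case: h => [|h]; rewrite ?big_nil ?eqxx.
rewrite big_cons; case: c; case: h => [|h]; rewrite /= ?qint0 ?mulr0 ?mul0r ?eqxx //;
  by rewrite mulf_eq0 negb_or => /andP [_ /IH ->]; rewrite /lbar; lia.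
Qed.

Lemma path_weight_pairing r h u b :
  path_weight r h u * q ^ (\sum_(a <- u) pairing a b) = path_weight r h u * qpair b h.
Proof.
have [->|/path_weight_height Hu] := eqVneq (path_weight r h u) 0; first by rewrite !mul0r.
have -> : \sum_(a <- u) pairing a b = \sum_(a <- u) lbar a * (2 * lbar b).
  by apply: eq_bigr => a _; case: a; case: b.
rewrite -mulr_suml Hu /qpair; case: b; rewrite /lbar.
  by rewrite (_ : _ * _ = - Posz (2 * h)) ?exprnN //; lia.
by rewrite (_ : _ * _ = Posz (2 * h)) //; lia.
Qed.

Lemma path_weightE r h u : path_weight r h u =
  (dyck_path h u)%:R * (-1) ^+ count id u * r ^+ count negb u *
  \prod_(1 <= i < (size u).+1) qint q (1 + h%:Z + psum u i).
Proof.
elim: u h => [|c u IH] h; first by rewrite dyck_path_nil big_geq // !mulr1.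
rewrite /= IH dyck_path_cons [in RHS]big_nat_recl // psumS psum0 addr0.
under [in RHS]eq_bigr do rewrite psumS addrA -(addrA 1).
rewrite -(addrA 1).
have [[-> ->]|Hc] : (c = ly /\ h = 0%N) \/ h%:Z + lbar c = step_height c h
  by case: c; case: h => [|h]; [right | right | left | right]; rewrite /lbar //=; lia.
  by rewrite /= qint0 mulr0 !mul0r.
rewrite Hc le0z_nat /= (_ : 1 + _ = (step_height c h).+1%:Z); last lia.
case: c Hc => /= Hc; rewrite ?add0n ?add1n !exprS; first by ring.
by case: h Hc => [|h] Hc /=; [move: Hc; rewrite /lbar; lia | ring].
Qed.

Fixpoint shuffle_weight r h v w : F :=
  if w is c :: w' then
    step_weight r c h * shuffle_weight r (step_height c h) v w'
    + (if v is b :: v' then (b == c)%:R * r * qpair b h * shuffle_weight r h v' w'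
       else 0)
  else ((h == 0) && (v == [::]))%:R.

Lemma shuffle_weight_size r h v w :
  (size w < size v)%N -> shuffle_weight r h v w = 0.
Proof.
elim: w h v => [|c w IH] h [|b v] //= Hs; first by rewrite andbF.
by rewrite !IH ?mulr0 ?addr0 // (ltn_trans _ Hs).
Qed.

Lemma shuffle_weightE r h v w m : (m + size v)%N = size w ->
  shuffle_weight r h v w =
  \sum_(u <- all_words m) path_weight r h u * r ^+ size v * vcoef (wstar q u v) w.
Proof.
elim: w h v m => [|c w IH] h v m Hs.
  case: m v Hs => [|m] [|b v] //= _.
  by rewrite big_seq1 vcoef_wstar_nil /= expr0 !mulr1 andbT.
under eq_bigr do rewrite vcoef_wstar_cons mulrDr.
rewrite big_split /=; congr (_ + _).
  case: m Hs => [|m] /= Hs.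
    by rewrite shuffle_weight_size ?big_seq1 ?mulr0 // -Hs.
  rewrite (IH _ _ m) ?cats0 ?big_cat ?big_map /=; last by move: Hs; rewrite addSn => -[].
  rewrite mulr_sumr -big_split; apply: eq_bigr => u _ /=.
  by case: c; rewrite /= ?eqxx; ring.
case: v Hs => [|b v] Hs; first by rewrite big1 // => u _; rewrite mulr0.
rewrite (IH _ _ m) ?mulr_sumr; last by move: Hs; rewrite /= addnS => -[].
apply: eq_bigr => u _; rewrite [size _]/= exprS.
transitivity ((b == c)%:R * r * r ^+ size v * vcoef (wstar q u v) w *
  (path_weight r h u * q ^ (\sum_(a <- u) pairing a b))); last by ring.
by rewrite path_weight_pairing; ring.
Qed.

Definition xy_tail (s : bool) (k : nat) : word := if s then ly :: xy_word k else xy_word k.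

Fixpoint xy_weight r h (s : bool) w : F :=
  if w is c :: w' then
    step_weight r c h * xy_weight r (step_height c h) s w'
    + (if c == ~~ s then r * qpair c h * xy_weight r h c w' else 0)
  else ((h == 0) && ~~ s)%:R.

Lemma xy_weightE r h s w N : (size w < 2 * N)%N ->
  xy_weight r h s w = \sum_(k < N) shuffle_weight r h (xy_tail s k) w.
Proof.
elim: w h s N => [|c w IH] h s N HN.
  case: N HN => [|N] // _; rewrite big_ord_recl big1 ?addr0 /=; first by case: s.
  by move=> k _; case: s; rewrite andbF.
rewrite /= big_split /= -mulr_sumr -IH; last exact: ltn_trans HN.
congr (_ + _); case: s; case: c HN => /= HN.
- by rewrite big1 // => k _; rewrite !mul0r.
- rewrite (IH _ _ N) ?mulr_sumr ?(ltn_trans _ HN) //.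
  by apply: eq_bigr => k _; rewrite mul1r.
- case: N HN => [|N] HN //; rewrite big_ord_recl /= add0r (IH _ _ N.+1).
    rewrite big_ord_recr /= shuffle_weight_size ?addr0 ?mulr_sumr.
      by apply: eq_bigr => k _; rewrite mul1r.
    by rewrite /= size_xy_word; lia.
  exact: ltn_trans HN.
- by rewrite big1 // => -[[|k] ?] _; rewrite //= !mul0r.
Qed.

Lemma vcoef_Cat_star_Gt i k w : vcoef (vstar q (Cat q i) (Gt F k)) w =
  \sum_(u <- all_words (2 * i) | catalan u)
    qint q 1 * \prod_(1 <= j < (2 * i).+1) qint q (1 + psum u j)
    * vcoef (wstar q u (xy_word k)) w.
Proof.
rewrite /vstar vcoef_flatten big_allpairs_dep /Cat big_map big_filter.
by apply: eq_bigr => u _; rewrite big_seq1 vcoef_scale mulr1.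
Qed.

Lemma vcoef_Cat_star_Gt_eq0 i k w :
  (2 * (i + k) != size w)%N -> vcoef (vstar q (Cat q i) (Gt F k)) w = 0.
Proof.
move=> Hs; rewrite vcoef_Cat_star_Gt big_seq_cond big1 // => u /andP [Hu _].
by rewrite vcoef_wstar_eq0 ?mulr0 // size_xy_word (size_all_words Hu) -mulnDr.
Qed.

Lemma Cat_star_Gt_shuffle_weight r i k w : size w = (2 * (i + k))%N ->
  (-1) ^+ i * r ^+ (i + 2 * k) * vcoef (vstar q (Cat q i) (Gt F k)) w
  = qint q 1 * shuffle_weight r 0 (xy_word k) w.
Proof.
move=> Hw; have Hs : (2 * i + size (xy_word k))%N = size w.
  by rewrite size_xy_word Hw mulnDr.
rewrite (shuffle_weightE _ _ Hs).
rewrite vcoef_Cat_star_Gt big_mkcond !mulr_sumr big_seq [RHS]big_seq.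
apply: eq_bigr => u /size_all_words Hu.
rewrite path_weightE -catalan_dyck_path size_xy_word Hu.
have [Hc|_] := boolP (catalan u); last by rewrite !(mulr0, mul0r).
have [-> ->] := catalan_count Hu Hc.
under [in RHS]eq_bigr do rewrite addr0.
by rewrite mulr1n exprD; ring.
Qed.

Lemma sum_Cat_star_Gt_xy_weight r n w : size w = (2 * n)%N ->
  \sum_(i <- iota 0 n.+1)
    (-1) ^+ i * r ^+ (2 * n - i) * vcoef (vstar q (Cat q i) (Gt F (n - i))) w
  = qint q 1 * xy_weight r 0 false w.
Proof.
move=> Hw; have HN : (size w < 2 * n.+1)%N by rewrite Hw; lia.
rewrite (xy_weightE _ _ _ HN).
rewrite mulr_sumr -(big_mkord xpredT (fun k => _ * shuffle_weight r 0 (xy_tail false k) w)).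
rewrite big_nat_rev; apply: eq_big_seq => i; rewrite mem_iota => /andP [_ Hi].
rewrite /xy_tail (_ : (0 + n.+1 - i.+1 = n - i)%N); last lia.
have Hwi : size w = (2 * (i + (n - i)))%N by rewrite Hw; lia.
rewrite -(Cat_star_Gt_shuffle_weight r Hwi).
by rewrite (_ : (2 * n - i = i + 2 * (n - i))%N) //; lia.
Qed.

Lemma sum_Cat_star_Gt_qint n w : size w = (2 * n)%N ->
  \sum_(i <- iota 0 n.+1)
    (-1) ^+ i * qint q (Posz (2 * n) - Posz i) * vcoef (vstar q (Cat q i) (Gt F (n - i))) w
  = qint q 1 * (xy_weight q 0 false w - xy_weight q^-1 0 false w) / (q - q^-1).
Proof.
move=> Hw; rewrite mulrBr -(sum_Cat_star_Gt_xy_weight q Hw).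
rewrite -(sum_Cat_star_Gt_xy_weight q^-1 Hw) -sumrB mulr_suml.
apply: eq_big_seq => i; rewrite mem_iota => /andP [_ Hi].
rewrite (_ : _ - _ = Posz (2 * n - i)) ?qint_nat ?exprVn; last lia.
by ring.
Qed.

End Weights.

Section Inversion.
Variables (F : fieldType) (q : F).
Hypotheses (hq0 : q != 0) (hq2 : q ^+ 2 != 1).

Lemma xy_weight_inv w h :
  [/\ xy_weight q q^-1 0 false w = xy_weight q q 0 false w,
      xy_weight q q^-1 h true w = - qint q h.+1 * (q ^+ h)^-1 * xy_weight q q h true w
                                  + qint q h.+2 * q^-1 * xy_weight q q h.+1 false w
    & xy_weight q q^-1 h.+1 false w = (q ^+ h)^-1 * xy_weight q q^-1 h true w].
Proof.
have hq2' : q * q - 1 != 0 by rewrite subr_eq0 -expr2.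
have q2 k : q ^+ (2 * k) = q ^+ k * q ^+ k by rewrite mulnC exprM expr2.
elim: w h => [|c w IH] h; first by split; rewrite /= ?andbF ?mulr0 ?addr0.
have [I1 _ _] := IH 0%N.
have I2 k := let: And3 _ e _ := IH k in e.
have I3 k := let: And3 _ _ e := IH k in e.
split; case: c; case: h => [|h];
  rewrite /= ?qint0 ?mulr0 ?mul0r ?addr0 ?add0r ?I3 ?I2 ?I1;
  rewrite /qpair ?qint_nat ?q2 ?exprS ?expr0 //.
all: by field; rewrite ?oner_eq0 ?hq0 ?hq2' ?expf_neq0.
Qed.

End Inversion.

Theorem theorem11p14 (F : fieldType) (q : F) (hq0 : q != 0)
    (hq : forall m : nat, (0 < m)%N -> q ^+ m != 1) (n : nat) :
  forall w : word,
    vcoef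
      (flatten [seq vscale ((-1) ^+ i * qint q (Posz (2 * n)%N - Posz i))
                       (vstar q (Cat q i) (Gt F (n - i)%N))
               | i <- iota 0 n.+1])
      w = 0.
Proof.
move=> w; rewrite vcoef_flatten big_map.
under eq_bigr do rewrite vcoef_scale.
have [Hw|Hw] := eqVneq (size w) (2 * n)%N.
  have [xy_inv _ _] := xy_weight_inv hq0 (hq 2%N isT) w 0.
  by rewrite sum_Cat_star_Gt_qint // xy_inv subrr mulr0 mul0r.
rewrite big_seq big1 // => i; rewrite mem_iota => /andP [_ Hi].
by rewrite vcoef_Cat_star_Gt_eq0 ?mulr0 //; lia.
Qed.
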